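(* Let $P=(P_1,\ldots,P_n)$ be a reduced profile of linear orders on a finite set $A$ with voter set $N=\{1,\ldots,n\}$, and suppose $P$ is single-crossing with respect to a tree $T$ on vertex set $N$ which is minimal for $P$. Then a voter $i$ is a leaf (vertex of degree 1) of $T$ if and only if there exist alternatives $a,b\in A$ such that $a\succ_i b$ and $b\succ_j a$ for all $j\in N\setminus\{i\}$.
   Context: Voter $i$ prefers $a$ to $b$ is written $a\succ_i b$. A profile is reduced if no two voters have identical linear orders. Given a tree $T=(N,E)$, the profile is single-crossing with respect to $T$ if for every pair of distinct alternatives $a,b$ one of the following holds: (i) there is an edge $e\in E$ (an ''$ab$-cut'') such that, removing $e$ from $T$, the two resulting subtrees have vertex sets $V_1,V_2$ with all voters in $V_1$ preferring $a$ to $b$ and all voters in $V_2$ preferring $b$ to $a$; or (ii) all voters prefer $a$ to $b$, or all voters prefer $b$ to $a$. $T$ is minimal with respect to $P$ if every edge of $T$ is an $ab$-cut for some pair of alternatives $a,b$. *)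

From mathcomp Require Import all_boot.
Set Implicit Arguments. Unset Strict Implicit. Unset Printing Implicit Defensive.

(* A (strict) linear order on a finite set A, as a boolean relation:
   r a b means "a is preferred to b". *)
Definition linear_order (A : finType) (r : rel A) : Prop :=
  [/\ irreflexive r, transitive r & forall a b, a != b -> r a b || r b a].

(* A profile: voter i's preference is P i. Voters are 'I_n = {0..n-1}. *)
Definition profile (n : nat) (A : finType) (P : 'I_n -> rel A) : Prop :=
  forall i, linear_order (P i).

Definition reduced (n : nat) (A : finType) (P : 'I_n -> rel A) : Prop :=
  forall i j, i != j -> exists a b, P i a b != P j a b.

Definition remove_edge (n : nat) (E : rel 'I_n) (u v : 'I_n) : rel 'I_n :=
  [rel x y | E x y && ~~ (((x == u) && (y == v)) || ((x == v) && (y == u)))].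

(* A tree: simple, connected graph in which every edge is a bridge
   (i.e. a minimally connected graph). *)
Definition is_tree (n : nat) (E : rel 'I_n) : Prop :=
  [/\ irreflexive E, symmetric E,
      (forall x y, connect E x y)
    & forall u v, E u v -> ~~ connect (remove_edge E u v) u v].

Definition is_cut (n : nat) (A : finType) (P : 'I_n -> rel A) (E : rel 'I_n)
    (u v : 'I_n) (a b : A) : Prop :=
  E u v /\
  (forall x, connect (remove_edge E u v) u x -> P x a b) /\
  (forall x, connect (remove_edge E u v) v x -> P x b a).

Definition single_crossing (n : nat) (A : finType) (P : 'I_n -> rel A)
    (E : rel 'I_n) : Prop :=
  forall a b : A, a != b ->
    (exists u v, is_cut P E u v a b)
    \/ (forall i, P i a b) \/ (forall i, P i b a).

Definition minimal_tree (n : nat) (A : finType) (P : 'I_n -> rel A)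
    (E : rel 'I_n) : Prop :=
  forall u v, E u v -> exists a b : A, is_cut P E u v a b.

Definition is_leaf (n : nat) (E : rel 'I_n) (i : 'I_n) : bool :=
  #|[set j | E i j]| == 1.

From mathcomp Require Import all_boot.

Set Implicit Arguments.
Unset Strict Implicit.
Unset Printing Implicit Defensive.

(* A leaf i with unique neighbour k: minimality provides an ab-cut on the
   edge {i, k}, whose i-side is {i} and whose k-side is everything else.
   Conversely, if i alone prefers a to b, single-crossing must separate i from
   the rest by an ab-cut {i, v}; any other neighbour of i would lie on the
   i-side of that cut and hence prefer a to b, so v is the only neighbour. *)

Section LinearOrder.

Variables (A : finType) (r : rel A).
Hypothesis r_lin : linear_order r.

Lemma linear_order_asym a b : r a b -> ~~ r b a.
Proof.
case: r_lin => irr tr _ rab; apply/negP => rba.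
by have := tr _ _ _ rab rba; rewrite irr.
Qed.

Lemma linear_order_neq a b : r a b -> a != b.
Proof. by case: r_lin => irr _ _ rab; apply: contraTneq rab => ->; rewrite irr. Qed.

End LinearOrder.

Section Leaves.

Variables (n : nat) (E : rel 'I_n).

Lemma is_leafP i : reflect (exists k, forall y, E i y = (y == k)) (is_leaf E i).
Proof.
apply: (iffP cards1P) => [[k Hk] | [k Hk]]; exists k.
  by move=> y; move/setP/(_ y): Hk; rewrite !inE.
by apply/setP => y; rewrite !inE Hk.
Qed.

Lemma remove_edge_other i v w : E i w -> w != v -> remove_edge E i v i w.
Proof.
move=> Eiw wv; rewrite /remove_edge /= Eiw eqxx (negbTE wv) /=.
by apply: contra wv => /andP[/eqP <- /eqP ->].
Qed.

Lemma connect_remove_leaf_edge i k j :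
  (forall y, E i y = (y == k)) ->
  connect E k j -> j != i -> connect (remove_edge E i k) k j.
Proof.
move=> nbr /connectP[p pth ->] ji.
suff: forall x, (x == i) || connect (remove_edge E i k) k x -> path E x p ->
    (last x p == i) || connect (remove_edge E i k) k (last x p).
  by move=> /(_ k); rewrite connect0 orbT => /(_ isT pth); rewrite (negbTE ji).
elim: p {pth ji} => [|y p IH] x //= Hx /andP[Exy pth]; apply: IH pth.
have [xi | xi] := eqVneq x i.
  by move: Exy; rewrite xi nbr => /eqP ->; rewrite connect0 orbT.
have [// | yi] := eqVneq y i.
move: Hx; rewrite (negbTE xi) /= => Hx.
apply: connect_trans Hx (connect1 _).
by rewrite /remove_edge /= Exy (negbTE xi) (negbTE yi) andbF.
Qed.

End Leaves.

Section Cuts.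

Variables (n : nat) (A : finType) (P : 'I_n -> rel A) (E : rel 'I_n).
Hypotheses (P_profile : profile P) (E_irr : irreflexive E).

Lemma leaf_cut_isolates i k a b :
  (forall y, E i y = (y == k)) -> (forall x y, connect E x y) -> is_cut P E i k a b ->
  P i a b /\ forall j, j != i -> P j b a.
Proof.
move=> nbr conn [_ [Hi Hk]]; split; first exact: Hi (connect0 _ _).
by move=> j ji; apply: Hk; exact: connect_remove_leaf_edge.
Qed.

Lemma isolating_cut_at_leaf i u v a b :
  (forall j, j != i -> P j b a) -> is_cut P E u v a b ->
  u = i /\ forall w, E i w = (w == v).
Proof.
move=> others [Euv [Hu _]].
have asym j : j != i -> ~~ P j a b.
  by move=> ji; apply: linear_order_asym (others j ji).
have [ui | ui] := eqVneq u i; last by case/negP: (asym u ui); apply/Hu/connect0.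
subst u; split=> // w; apply/idP/eqP => [Eiw | ->] //.
have wi : w != i by apply: contraTneq Eiw => ->; rewrite E_irr.
apply/eqP; apply: contraNT (asym w wi) => wv.
exact/Hu/connect1/remove_edge_other.
Qed.

End Cuts.

Theorem proposition1 (n : nat) (A : finType) (P : 'I_n -> rel A) (E : rel 'I_n) :
  1 < n ->
  profile P -> reduced P ->
  is_tree E -> single_crossing P E -> minimal_tree P E ->
  forall i : 'I_n,
    is_leaf E i <-> exists a b : A, P i a b /\ forall j, j != i -> P j b a.
Proof.
move=> n_gt1 HP _ [irr _ conn _] SC MT i; split.
  move=> /is_leafP[k nbr].
  have [a [b cut]] : exists a b, is_cut P E i k a b by apply: MT; rewrite nbr.
  exists a, b; exact: leaf_cut_isolates cut.
case=> a [b [Pi others]].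
have ab := linear_order_neq (HP i) Pi.
have [j] : exists j, j \in [set~ i].
  by apply/card_gt0P; rewrite cardsC1 card_ord -ltnS (ltn_predK n_gt1).
rewrite !inE => ji.
case: (SC a b ab) => [[u [v cut]] | [all_ab | all_ba]].
- have [_ nbr] := isolating_cut_at_leaf HP irr others cut.
  by apply/is_leafP; exists v.
- by have := linear_order_asym (HP j) (others j ji); rewrite all_ab.
- by have := linear_order_asym (HP i) Pi; rewrite all_ba.
Qed.
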